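(* Let $x_1,x_2,x_3>0$, $\gamma,\delta>0$ with $\gamma\ne1\ne\delta$, and let $$\mathbf{Q}=\begin{pmatrix}1&\delta x_1&x_2&x_3\\ 1/(\delta x_1)&1&x_2/x_1&x_3/x_1\\ 1/x_2&x_1/x_2&1&\gamma x_3/x_2\\ 1/x_3&x_1/x_3&x_2/(\gamma x_3)&1\end{pmatrix}$$ with principal right eigenvector $\mathbf{w}^{EM}$. Then $\gamma>1$ iff $w_3^{EM}/w_4^{EM}<\gamma x_3/x_2$, and $\gamma<1$ iff $w_3^{EM}/w_4^{EM}>\gamma x_3/x_2$.
   Context: The principal right eigenvector is the positive (Perron) eigenvector belonging to the largest eigenvalue. *)

From HB Require Import structures.
From mathcomp Require Import all_boot all_order all_algebra.
Set Implicit Arguments. Unset Strict Implicit. Unset Printing Implicit Defensive.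
Import Order.TTheory GRing.Theory Num.Theory.
Local Open Scope ring_scope.

(* The 4x4 matrix Q of the paper, indices 0..3 standing for 1..4. *)
Definition Qmat (R : realFieldType) (x1 x2 x3 g d : R) : 'M[R]_4 :=
  \matrix_(i < 4, j < 4)
    nth 0 (nth [::]
      [:: [:: 1; d * x1; x2; x3];
          [:: (d * x1)^-1; 1; x2 / x1; x3 / x1];
          [:: x2^-1; x1 / x2; 1; g * x3 / x2];
          [:: x3^-1; x1 / x3; x2 / (g * x3); 1]] i) j.

Definition principal_right_eigenvector (R : realFieldType) (n : nat)
    (A : 'M[R]_n) (w : 'cV[R]_n) : Prop :=
  (forall i, 0 < w i 0) /\
  exists lam : R, A *m w = lam *: w /\ (forall mu, eigenvalue A mu -> mu <= lam).

From HB Require Import structures.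
From mathcomp Require Import all_boot all_order all_algebra.
From mathcomp Require Import ring lra.
Set Implicit Arguments.
Unset Strict Implicit.
Unset Printing Implicit Defensive.
Import Order.TTheory GRing.Theory Num.Theory.
Local Open Scope ring_scope.

(** With [a = x2 w3], [b = x3 w4]
   and [P = w1 + x1 w2 > 0] they read [P + a + g b = lam a] and
   [g P + a + g b = g lam b].  Eliminating [P] between them, with
   [mu = lam - 1], gives [(mu^2 - 1)(a - g b) = P (mu - 1)(1 - g)]; positivity
   forces [mu > 1], so [a - g b] has the sign of [1 - g], and
   [w3 / w4 < g x3 / x2] is exactly [a < g b]. *)

Section TwoRowSystem.

Variables (R : realFieldType) (P a b g lam : R).
Hypotheses (hP : 0 < P) (ha : 0 < a) (hb : 0 < b) (hg : 0 < g).
Hypothesis row3 : P + a + g * b = lam * a.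
Hypothesis row4 : g * P + a + g * b = g * lam * b.

Let mu := lam - 1.

Let mu_a : mu * a - g * b = P.
Proof. by move: row3; rewrite /mu; lra. Qed.

Let mu_b : g * mu * b - a = g * P.
Proof. by move: row4; rewrite /mu; lra. Qed.

Let mu_sqr_a : (mu ^+ 2 - 1) * a = P * (mu + g).
Proof.
transitivity (mu * (mu * a - g * b) + (g * mu * b - a)); first by ring.
by rewrite mu_a mu_b; ring.
Qed.

Lemma two_row_lam_sub1_gt1 : 1 < mu.
Proof.
have mu_gt0 : 0 < mu.
  have -> : mu = (P + g * b) / a by rewrite -mu_a subrK mulfK ?gt_eqF.
  by rewrite divr_gt0 // addr_gt0 // mulr_gt0.
have : 0 < (mu ^+ 2 - 1) * a by rewrite mu_sqr_a mulr_gt0 // addr_gt0.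
rewrite pmulr_lgt0 // subr_gt0 => mu2_gt1.
by rewrite -(ltr_pXn2r (ltn0Sn 1)) ?expr1n // nnegrE ltW.
Qed.

Lemma two_row_sign_identity :
  (mu ^+ 2 - 1) * (a - g * b) = P * (mu - 1) * (1 - g).
Proof.
transitivity (mu * (mu * a - g * b) + (g * mu * b - a)
              - (mu * (g * mu * b - a) + (mu * a - g * b))); first by ring.
by rewrite mu_a mu_b; ring.
Qed.

Lemma two_row_system_sign : ((a < g * b) = (1 < g)) * ((g * b < a) = (g < 1)).
Proof.
have mu1 := two_row_lam_sub1_gt1.
have c_gt0 : 0 < mu ^+ 2 - 1 by rewrite subr_gt0 expr2; nra.
have Pm_gt0 : 0 < P * (mu - 1) by rewrite mulr_gt0 // subr_gt0.
split.
- by rewrite -[LHS]subr_lt0 -(pmulr_rlt0 (a - g * b) c_gt0)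
    two_row_sign_identity pmulr_rlt0 // subr_lt0.
- by rewrite -[LHS]subr_gt0 -(pmulr_rgt0 (a - g * b) c_gt0)
    two_row_sign_identity pmulr_rgt0 // subr_gt0.
Qed.

End TwoRowSystem.

Lemma big_ord4_inord (R : nmodType) (F : 'I_4 -> R) :
  \sum_(j < 4) F j = F (inord 0) + F (inord 1) + F (inord 2) + F (inord 3).
Proof.
rewrite !big_ord_recl big_ord0 addr0 !addrA /=.
by congr (_ + _ + _ + _); congr F; apply/val_inj; rewrite /= inordK.
Qed.

Section QmatRows.

Variables (R : realFieldType) (x1 x2 x3 g d lam : R) (w : 'cV[R]_4).
Hypotheses (hx2 : 0 < x2) (hx3 : 0 < x3) (hg : 0 < g).
Hypothesis eigen : Qmat x1 x2 x3 g d *m w = lam *: w.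

Let eigen_row (i : nat) : (i < 4)%N ->
  \sum_(j < 4) Qmat x1 x2 x3 g d (inord i) j * w j 0 = lam * w (inord i) 0.
Proof.
move=> lt_i4.
by have := congr1 (fun M : 'cV[R]_4 => M (inord i) 0) eigen; rewrite !mxE.
Qed.

Lemma Qmat_eigen_row3 :
  w (inord 0) 0 + x1 * w (inord 1) 0 + x2 * w (inord 2) 0
    + g * (x3 * w (inord 3) 0) = lam * (x2 * w (inord 2) 0).
Proof.
have := eigen_row (i := 2) isT; rewrite big_ord4_inord !mxE !inordK //= => e3.
by rewrite [RHS]mulrCA -e3; field; rewrite gt_eqF.
Qed.

Lemma Qmat_eigen_row4 :
  g * (w (inord 0) 0 + x1 * w (inord 1) 0) + x2 * w (inord 2) 0
    + g * (x3 * w (inord 3) 0) = g * lam * (x3 * w (inord 3) 0).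
Proof.
have := eigen_row (i := 3) isT; rewrite big_ord4_inord !mxE !inordK //= => e4.
have -> : g * lam * (x3 * w (inord 3) 0) = g * x3 * (lam * w (inord 3) 0).
  by ring.
by rewrite -e4; field; rewrite !gt_eqF.
Qed.

End QmatRows.

Lemma ltr_ratio_cross (R : realFieldType) (u v s t : R) :
  0 < v -> 0 < t -> (u / v < s / t) = (t * u < s * v).
Proof.
move=> v_gt0 t_gt0.
by rewrite ltr_pdivlMr // mulrAC ltr_pdivrMr // mulrC.
Qed.

Theorem mainTheorem16 (R : realFieldType) (x1 x2 x3 g d : R)
  (hx1 : 0 < x1) (hx2 : 0 < x2) (hx3 : 0 < x3) (hg : 0 < g) (hd : 0 < d)
  (hg1 : g != 1) (hd1 : d != 1) (w : 'cV[R]_4)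
  (hw : principal_right_eigenvector (Qmat x1 x2 x3 g d) w) :
  (1 < g <-> w (inord 2) 0 / w (inord 3) 0 < g * x3 / x2) /\
  (g < 1 <-> g * x3 / x2 < w (inord 2) 0 / w (inord 3) 0).
Proof.
case: hw => w_gt0 [lam [eigen _]].
have row3 := Qmat_eigen_row3 hx2 eigen.
have row4 := Qmat_eigen_row4 hx3 hg eigen.
have P_gt0 : 0 < w (inord 0) 0 + x1 * w (inord 1) 0.
  by rewrite addr_gt0 // mulr_gt0.
have [lt_eq gt_eq] := two_row_system_sign P_gt0
  (mulr_gt0 hx2 (w_gt0 _)) (mulr_gt0 hx3 (w_gt0 _)) hg row3 row4.
rewrite !ltr_ratio_cross ?w_gt0 //.
by rewrite -lt_eq -gt_eq [w (inord 3) 0 * _]mulrC [w (inord 2) 0 * _]mulrC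
  !mulrA.
Qed.
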